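(* Let $\mathcal A$ be a finite alphabet and $\Psi: \mathcal A^*\to \mathcal A^*$. Then $\Psi$ is a symmetry if and only if $\Psi$ is a morphism or an antimorphism whose restriction to $\mathcal A$ is a permutation of the letters of $\mathcal A$.
   Context: A symmetry on $\mathcal A^*$ is a map $\Psi:\mathcal A^*\to\mathcal A^*$ such that (1) $\Psi$ is a bijection and (2) for all $w,v\in\mathcal A^*$, the number of occurrences of $w$ in $v$ equals the number of occurrences of $\Psi(w)$ in $\Psi(v)$ (an occurrence of $w$ in $v=v_1\cdots v_m$ is an index $i$ such that $w$ is a prefix of $v_iv_{i+1}\cdots v_m$). $\Psi$ is a morphism if $\Psi(vw)=\Psi(v)\Psi(w)$ and an antimorphism if $\Psi(vw)=\Psi(w)\Psi(v)$ for all $v,w\in\mathcal A^*$. *)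

From mathcomp Require Import all_boot.
Set Implicit Arguments. Unset Strict Implicit. Unset Printing Implicit Defensive.

(* Number of occurrences of w in v = v_1...v_m: the number of indices
   i in {1..m} such that w is a prefix of v_i ... v_m.  (0-based: i < size v,
   w prefix of drop i v.) *)
Definition occ (A : eqType) (w v : seq A) : nat :=
  count (fun i => prefix w (drop i v)) (iota 0 (size v)).

Definition symmetry (A : eqType) (Psi : seq A -> seq A) : Prop :=
  bijective Psi /\ forall w v : seq A, occ w v = occ (Psi w) (Psi v).

Definition morphism (A : eqType) (Psi : seq A -> seq A) : Prop :=
  forall v w : seq A, Psi (v ++ w) = Psi v ++ Psi w.

Definition antimorphism (A : eqType) (Psi : seq A -> seq A) : Prop :=
  forall v w : seq A, Psi (v ++ w) = Psi w ++ Psi v.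

Definition letter_perm (A : eqType) (Psi : seq A -> seq A) : Prop :=
  exists f : A -> A, bijective f /\ forall a : A, Psi [:: a] = [:: f a].

From mathcomp Require Import all_boot zify.
Set Implicit Arguments. Unset Strict Implicit. Unset Printing Implicit Defensive.

(* A symmetry preserves the number of occurrences of the empty word, i.e.
   lengths, so it maps letters to letters, injectively.  The factors of length
   n - 1 of a word v of length n >= 2 are exactly its prefix p and suffix s of
   that length, so Psi v has prefix and suffix {Psi p, Psi s}, in some order.
   A word is determined by these two factors, and even when they are swapped
   the occurrence counts of the factors of length n - 2 pin it down.  Hence two
   symmetries agreeing on words of length <= 2 coincide.  On words of length 2
   a symmetry keeps the order of every pair or reverses every pair (one
   reversed pair ab forces bc to be reversed, looking at abc), so it is the
   letter map or its reversal. *)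

Section Occurrences.
Variable A : eqType.
Implicit Types (a b : A) (w v s : seq A).

Lemma occ_cons w a v : occ w (a :: v) = prefix w (a :: v) + occ w v.
Proof.
rewrite /occ /= -[iota 1 _]/(iota (1 + 0) _) iotaDl count_map.
by congr (_ + _); apply: eq_count => i; rewrite /= add1n.
Qed.

Lemma occ0s v : occ [::] v = size v.
Proof. by elim: v => // a v IHv; rewrite occ_cons IHv. Qed.

Lemma occ_oversize w v : size v < size w -> occ w v = 0.
Proof.
elim: v => // a v IHv lt_vw; rewrite occ_cons IHv; last by rewrite ltnW.
by case: prefix (@size_prefix _ w (a :: v)) => // /(_ isT); rewrite leqNgt lt_vw.
Qed.

Lemma occ_sum_prefix w s k : 0 < size w -> size s = size w + k ->
  occ w s = \sum_(i < k.+1) prefix w (drop i s).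
Proof.
move=> w_gt0; elim: k s => [|k IHk] [|a s] /= size_s; try lia.
  by rewrite occ_cons occ_oversize ?big_ord1 ?addn0 // size_s addn0.
by rewrite occ_cons big_ord_recl IHk //; lia.
Qed.

Lemma prefix_rconsD w s a :
  prefix w (rcons s a) = prefix w s + (w == rcons s a) :> nat.
Proof.
elim: s w => [|b s IHs] [|c w] //=.
by rewrite eqseq_cons; case: (c == b) => //=; rewrite IHs.
Qed.

Lemma suffix_consD w b t :
  suffix w (b :: t) = suffix w t + (w == b :: t) :> nat.
Proof.
by rewrite /suffix rev_cons prefix_rconsD -rev_cons (can_eq revK).
Qed.

Lemma occ_rcons w v a : occ w (rcons v a) = occ w v + suffix w (rcons v a).
Proof.
elim: v => [|b v IHv].
  have := prefix_rconsD w [::] a; have := suffix_consD w a [::].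
  by rewrite occ_cons /= suffixs0 addn0; case: w.
rewrite rcons_cons occ_cons IHv -rcons_cons prefix_rconsD rcons_cons suffix_consD.
by rewrite occ_cons; lia.
Qed.

Lemma occ_rev w v : occ (rev w) (rev v) = occ w v.
Proof.
elim: v => // b v IHv.
by rewrite rev_cons occ_rcons IHv -rev_cons suffix_rev occ_cons addnC.
Qed.

End Occurrences.

Lemma occ_map (A B : eqType) (f : A -> B) w v : injective f ->
  occ (map f w) (map f v) = occ w v.
Proof.
move=> inj_f; elim: v => // a v IHv.
rewrite /= occ_cons occ_cons IHv !prefixE size_map -map_cons -map_take.
by rewrite (inj_eq (inj_map inj_f)).
Qed.

Section Ends.
Variable T : eqType.
Implicit Types u x p s t w : seq T.

Definition ends u p s := take (size u).-1 u = p /\ behead u = s.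

Lemma behead_take k u : behead (take k u) = take k.-1 (behead u).
Proof. by case: k u => [|k] [|a u]; rewrite ?take0. Qed.

Lemma ends_inj u x p s : size u = size x -> 1 < size u ->
  ends u p s -> ends x p s -> u = x.
Proof.
move=> eq_ux u_gt1 [pu su] [px sx].
have take1 y : 1 < size y -> take 1 y = take 1 (take (size y).-1 y).
  by move=> y_gt1; rewrite take_takel // -ltnS prednK // ltnW.
rewrite -[u](cat_take_drop 1) -[x](cat_take_drop 1) !drop1 su sx.
by rewrite take1 // [take 1 x]take1 -?eq_ux // pu {1}eq_ux px.
Qed.

Lemma occ_gt0_ends w v p s : 0 < size w -> size w = (size v).-1 -> ends v p s ->
  (0 < occ w v) = (w == p) || (w == s).
Proof.
move=> w_gt0 size_w [<- <-].
rewrite (@occ_sum_prefix _ w v 1) //; last lia.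
rewrite big_ord_recl big_ord1 /= drop0 drop1 addn_gt0 !lt0b !prefixE size_w eq_sym.
by rewrite [take _ (behead _)]take_oversize ?size_behead // (eq_sym _ w).
Qed.

Lemma eq_period2 u x : size u = size x ->
  drop 2 u = take (size u - 2) u -> drop 2 x = take (size x - 2) x ->
  take 2 u = take 2 x -> u = x.
Proof.
move=> eq_ux per_u per_x take2.
suff take_eq k : take k u = take k x by rewrite -[u]take_size take_eq eq_ux take_size.
elim/ltn_ind: k => -[|[|k]] IHk; rewrite ?take0 //.
  by rewrite -[take 1 u](@take_takel _ 1 2) // take2 take_takel.
rewrite -[k.+2]/(2 + k) !takeD per_u per_x -eq_ux -!take_min take2 IHk //.
by rewrite ltnS (leq_trans (geq_minl _ _)).
Qed.

Lemma ends_swap_period u x p s : size u = size x ->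
  ends u p s -> ends x s p -> drop 2 x = take (size x - 2) x.
Proof.
move=> eq_ux [pu su] [px sx].
rewrite drop_behead /= sx -pu behead_take su -px take_takel -eq_ux; last exact: leq_pred.
by congr take; lia.
Qed.

Lemma ends_swap_eq u x p s : size u = size x -> 2 < size u ->
  ends u p s -> ends x s p ->
  (forall t, size t = size u - 2 -> occ t u = occ t x) -> u = x.
Proof.
(* Both words are 2-periodic.  With n := size u, t := take (n - 2) x and
   c := prefix t u, t occurs 2 + c times in x but 1 + 2c times in u, so c
   holds and u, x start with the same two letters. *)
move=> eq_ux u_gt2 ends_u ends_x eq_occ.
have per_x := ends_swap_period eq_ux ends_u ends_x.
have per_u := ends_swap_period (esym eq_ux) ends_x ends_u.
case: ends_u ends_x => [pu su] [sx px].
set n := size u in u_gt2 per_u pu eq_occ eq_ux.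
set t := take (n - 2) x.
have size_t : size t = n - 2 by rewrite size_takel // -eq_ux leq_subr.
have occ_t y : size y = n ->
    occ t y = prefix t y + prefix t (behead y) + prefix t (drop 2 y).
  move=> size_y; rewrite (@occ_sum_prefix _ t y 2) ?size_t; try lia.
  by rewrite !big_ord_recr big_ord0 /= drop0 drop1.
have prefix_t_take y k : n - 2 <= k -> prefix t (take k y) = prefix t y.
  by move=> le_k; rewrite !prefixE size_t take_takel.
have t_u : prefix t u.
  have := eq_occ t size_t; rewrite !occ_t -?eq_ux // su px -sx -pu per_u per_x.
  have t_x : prefix t x by apply: prefix_take.
  by rewrite -eq_ux !prefix_t_take ?t_x; lia.
have take1 : take 1 u = take 1 x.
  move: t_u; rewrite prefixE size_t => /eqP take_u.
  by rewrite -(@take_takel _ 1 (n - 2)) ?take_u ?take_takel //; lia.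
apply: eq_period2 => //.
rewrite -[2]/(1 + 1) !takeD !drop1 su px -sx -pu -eq_ux !take_takel ?take1 //; lia.
Qed.
End Ends.

Lemma pair_eq_or_swap (T : Type) (a b c d : T) :
  a = c \/ a = d -> b = c \/ b = d -> c = a \/ c = b -> d = a \/ d = b ->
  (c = a /\ d = b) \/ (c = b /\ d = a).
Proof. by move=> [] ? [] ? [] ? [] ?; subst; auto. Qed.

Section Symmetry.
Variables (A : eqType) (Psi : seq A -> seq A).
Hypothesis PsiS : symmetry Psi.
Implicit Types (a b c : A) (v w p s : seq A).

Lemma sym_nil : Psi [::] = [::].
Proof.
case: PsiS => _ occ_Psi; have := occ_Psi [::] [::].
by case: (Psi [::]) => [//|a s]; rewrite occ_cons prefix_refl.
Qed.

Lemma size_sym v : size (Psi v) = size v.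
Proof. by case: PsiS => _ occ_Psi; rewrite -occ0s -sym_nil -occ_Psi occ0s. Qed.

Definition sym_letter a := head a (Psi [:: a]).

Lemma sym_letterE a : Psi [:: a] = [:: sym_letter a].
Proof. by rewrite /sym_letter; have := size_sym [:: a]; case: (Psi [:: a]) => [|b []]. Qed.

Lemma sym_letter_inj : injective sym_letter.
Proof.
case: PsiS => -[Phi PsiK _] _ a b eq_ab.
by have := congr1 Phi (sym_letterE a); rewrite eq_ab -sym_letterE !PsiK => -[].
Qed.

Lemma sym_ends v p s : 1 < size v -> ends v p s ->
  ends (Psi v) (Psi p) (Psi s) \/ ends (Psi v) (Psi s) (Psi p).
Proof.
move=> v_gt1 ends_v; case: PsiS => -[Phi PsiK PhiK] occ_Psi.
set m := (size v).-1.
have m_gt0 : 0 < m by rewrite -ltnS prednK // ltnW.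
have [size_p size_s] : size p = m /\ size s = m.
  by case: ends_v => <- <-; rewrite size_behead size_takel ?leq_pred.
have factor_v w : size w = m -> (0 < occ w v) = (w == p) || (w == s).
  by move=> size_w; apply: occ_gt0_ends; rewrite ?size_w.
have factor_u w : size w = m ->
    (0 < occ w (Psi v)) = (w == take m (Psi v)) || (w == behead (Psi v)).
  by move=> size_w; apply: occ_gt0_ends; rewrite /ends ?size_sym ?size_w.
have image_factor w : w = p \/ w = s -> Psi w = take m (Psi v) \/ Psi w = behead (Psi v).
  move=> w_ps; have size_w : size w = m by case: w_ps => ->.
  have : 0 < occ w v by rewrite factor_v // !(eq_sym w); case: w_ps => ->; rewrite eqxx ?orbT.
  by rewrite occ_Psi factor_u ?size_sym // => /orP[] /eqP; auto.
have preimage_factor w : w = take m (Psi v) \/ w = behead (Psi v) -> w = Psi p \/ w = Psi s.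
  move=> w_u; have size_w : size w = m.
    by case: w_u => ->; rewrite ?size_behead ?size_takel ?size_sym ?leq_pred.
  have size_Phi : size (Phi w) = m by rewrite -size_sym PhiK.
  have : 0 < occ (Phi w) v.
    by rewrite occ_Psi PhiK factor_u // !(eq_sym w); case: w_u => ->; rewrite eqxx ?orbT.
  by rewrite factor_v // => /orP[] /eqP <-; rewrite PhiK; auto.
rewrite /ends size_sym -/m.
by apply: pair_eq_or_swap;
  [apply: image_factor | apply: image_factor | apply: preimage_factor | apply: preimage_factor];
  auto.
Qed.

Lemma sym_pair a b :
  Psi [:: a; b] = [:: sym_letter a; sym_letter b] \/
  Psi [:: a; b] = [:: sym_letter b; sym_letter a].
Proof.
have ends_ab : ends [:: a; b] [:: a] [:: b] by [].
have := @sym_ends [:: a; b] _ _ isT ends_ab; rewrite /ends !sym_letterE size_sym /=.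
have := size_sym [:: a; b].
by case: (Psi [:: a; b]) => [|x [|y []]] //= _ [] [[->] [->]]; auto.
Qed.

Lemma sym_pair_swap a b c : a != b -> b != c ->
  Psi [:: a; b] = [:: sym_letter b; sym_letter a] ->
  Psi [:: b; c] = [:: sym_letter c; sym_letter b].
Proof.
move=> neq_ab neq_bc swap_ab; case: (sym_pair b c) => // keep_bc.
have ends_abc : ends [:: a; b; c] [:: a; b] [:: b; c] by [].
have := @sym_ends [:: a; b; c] _ _ isT ends_abc; rewrite /ends swap_ab keep_bc size_sym /=.
have := size_sym [:: a; b; c].
case: (Psi [:: a; b; c]) => [|x [|y [|z []]]] //= _.
by case=> -[[_ ->] [/sym_letter_inj eq_ab _]]; [move: neq_ab | move: neq_bc];
   rewrite eq_ab eqxx.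
Qed.

End Symmetry.

Lemma sym_eq_pairs (A : eqType) (Psi1 Psi2 : seq A -> seq A) :
  symmetry Psi1 -> symmetry Psi2 ->
  (forall a, Psi1 [:: a] = Psi2 [:: a]) ->
  (forall a b, Psi1 [:: a; b] = Psi2 [:: a; b]) -> Psi1 =1 Psi2.
Proof.
move=> S1 S2 eq1 eq2 v; have [n] := ubnP (size v); elim: n v => // n IHn v.
rewrite ltnS => size_v; case: (leqP (size v) 2) => [|v_gt2].
  by case: v {size_v} => [|a [|b [|c v]]] //= _; rewrite ?sym_nil.
have v_gt1 : 1 < size v by apply: ltnW.
have ends_v : ends v (take (size v).-1 v) (behead v) by [].
have eq_p : Psi1 (take (size v).-1 v) = Psi2 (take (size v).-1 v).
  by apply: IHn; rewrite size_takel ?leq_pred //; lia.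
have eq_s : Psi1 (behead v) = Psi2 (behead v) by apply: IHn; rewrite size_behead; lia.
have eq_occ t : size t = size v - 2 -> occ t (Psi1 v) = occ t (Psi2 v).
  case: (S1) => -[Phi1 _ Phi1K] occ1; case: (S2) => _ occ2 size_t.
  have size_Phi1 : size (Phi1 t) = size t by rewrite -(size_sym S1) Phi1K.
  by rewrite -(Phi1K t) -occ1 (IHn (Phi1 t)) -?occ2 // size_Phi1 size_t; lia.
case: (sym_ends S1 v_gt1 ends_v) => ends1; case: (sym_ends S2 v_gt1 ends_v);
  rewrite -eq_p -eq_s => ends2.
- by apply: ends_inj ends1 ends2; rewrite ?(size_sym S1) ?(size_sym S2).
- by apply: ends_swap_eq ends1 ends2 _; rewrite ?(size_sym S1) ?(size_sym S2).
- apply/esym/(ends_swap_eq _ _ ends2 ends1); rewrite ?(size_sym S1) ?(size_sym S2) //.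
  by move=> t /eq_occ.
- by apply: ends_inj ends1 ends2; rewrite ?(size_sym S1) ?(size_sym S2).
Qed.

Section Letters.
Variables (A : eqType) (f : A -> A).

Lemma morphism_map : morphism (map f).
Proof. exact: map_cat. Qed.

Lemma antimorphism_rev_map : antimorphism (rev \o map f).
Proof. by move=> v w; rewrite /= map_cat rev_cat. Qed.

Lemma symmetry_map : bijective f -> symmetry (map f).
Proof.
move=> [g fK gK]; split; first by exists (map g); apply: mapK.
by move=> w v; rewrite occ_map //; apply: can_inj fK.
Qed.

Lemma symmetry_rev_map : bijective f -> symmetry (rev \o map f).
Proof.
move=> [g fK gK]; split.
  by exists (map g \o rev) => v /=; rewrite ?revK ?(mapK fK) ?(mapK gK) ?revK.
by move=> w v; rewrite /= occ_rev occ_map //; apply: can_inj fK.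
Qed.

Variable Psi : seq A -> seq A.
Hypothesis Psi_letter : forall a, Psi [:: a] = [:: f a].

Lemma morphismE : morphism Psi -> Psi =1 map f.
Proof.
move=> Psi_hom; have Psi_nil : Psi [::] = [::].
  by apply: size0nil; have := congr1 size (Psi_hom [::] [::]); rewrite /= size_cat; lia.
by elim=> // a v IHv; rewrite -cat1s Psi_hom IHv Psi_letter.
Qed.

Lemma antimorphismE : antimorphism Psi -> Psi =1 rev \o map f.
Proof.
move=> Psi_anti; have Psi_nil : Psi [::] = [::].
  by apply: size0nil; have := congr1 size (Psi_anti [::] [::]); rewrite /= size_cat; lia.
by elim=> // a v IHv; rewrite -cat1s Psi_anti IHv Psi_letter /= rev_cons cats1.
Qed.

End Letters.

Lemma eq_symmetry (A : eqType) (Psi1 Psi2 : seq A -> seq A) :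
  Psi1 =1 Psi2 -> symmetry Psi2 -> symmetry Psi1.
Proof.
move=> eq12 [bij2 occ2]; split; first exact: (eq_bij bij2 (fun v => esym (eq12 v))).
by move=> w v; rewrite !eq12.
Qed.

Lemma sym_pairs (A : finType) (Psi : seq A -> seq A) : symmetry Psi ->
  (forall a b, Psi [:: a; b] = [:: sym_letter Psi a; sym_letter Psi b]) \/
  (forall a b, Psi [:: a; b] = [:: sym_letter Psi b; sym_letter Psi a]).
Proof.
move=> PsiS; set f := sym_letter Psi.
have [/forallP keep|] := boolP [forall a, forall b, Psi [:: a; b] == [:: f a; f b]].
  by left=> a b; apply/eqP/(forallP (keep a)).
case/forallPn=> a /forallPn [b /eqP not_keep]; right.
have swap_ab : Psi [:: a; b] = [:: f b; f a] by case: (sym_pair PsiS a b).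
have neq_ab : a != b by apply/eqP => eq_ab; apply: not_keep; rewrite swap_ab eq_ab.
have swap_b z : b != z -> Psi [:: b; z] = [:: f z; f b].
  by move=> neq_bz; apply: (sym_pair_swap PsiS neq_ab neq_bz swap_ab).
move=> c d; have [<-|neq_cd] := eqVneq c d; first by case: (sym_pair PsiS c c) => ->.
case: (eqVneq b c) neq_cd => [<- neq_bd|neq_bc neq_cd]; first exact: (swap_b d neq_bd).
exact: (sym_pair_swap PsiS neq_bc neq_cd (swap_b c neq_bc)).
Qed.

Theorem theorem13 (A : finType) (Psi : seq A -> seq A) :
  symmetry Psi <->
  ((morphism Psi \/ antimorphism Psi) /\ letter_perm Psi).
Proof.
split=> [PsiS | [[Psi_hom | Psi_anti] [f [bij_f Psi_letter]]]].
- pose f := sym_letter Psi.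
  have Psi_letter a : Psi [:: a] = [:: f a] by apply: sym_letterE.
  have bij_f : bijective f by apply: injF_bij; apply: sym_letter_inj.
  split; last by exists f.
  case: (sym_pairs PsiS) => [keep|swap]; [left|right].
  + have := sym_eq_pairs PsiS (symmetry_map bij_f) Psi_letter keep.
    by move=> eq_map v w; rewrite !eq_map morphism_map.
  + have := sym_eq_pairs PsiS (symmetry_rev_map bij_f) Psi_letter swap.
    by move=> eq_rev v w; rewrite !eq_rev antimorphism_rev_map.
- exact: eq_symmetry (morphismE Psi_letter Psi_hom) (symmetry_map bij_f).
- exact: eq_symmetry (antimorphismE Psi_letter Psi_anti) (symmetry_rev_map bij_f).
Qed.
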